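(* Every almost zero-dimensional space that is rim-$\sigma$C is zero-dimensional.
   Context: All spaces are separable and metrizable. A subset $A$ of $X$ is a C-set in $X$ if it is an intersection of clopen subsets of $X$; a $\sigma$C-set is a countable union of C-sets. $X$ is almost zero-dimensional if every point has a neighborhood basis consisting of C-sets in $X$. For a property P, $X$ is rim-P if $X$ has a basis of open sets whose boundaries have property P; rim-$\sigma$C means the boundaries are $\sigma$C-sets in $X$. *)

(* separable metrizable spaces modelled as separable metric spaces. *)
From Stdlib Require Import Reals.
Open Scope R_scope.

Record MetricSpace := {
  carrier :> Type;
  dist : carrier -> carrier -> R;
  dist_nonneg : forall x y, 0 <= dist x y;
  dist_eq0 : forall x y, dist x y = 0 <-> x = y;
  dist_sym : forall x y, dist x y = dist y x;
  dist_tri : forall x y z, dist x z <= dist x y + dist y z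
}.

Section Topo.
Variable X : MetricSpace.

Definition ball (x : X) (e : R) : X -> Prop := fun y => dist X x y < e.

Definition is_open (U : X -> Prop) : Prop :=
  forall x, U x -> exists e, 0 < e /\ forall y, ball x e y -> U y.

Definition is_closed (A : X -> Prop) : Prop := is_open (fun x => ~ A x).

Definition clopen (A : X -> Prop) : Prop := is_open A /\ is_closed A.

Definition closure (A : X -> Prop) : X -> Prop :=
  fun x => forall e, 0 < e -> exists y, A y /\ dist X x y < e.

Definition interior (A : X -> Prop) : X -> Prop :=
  fun x => exists e, 0 < e /\ forall y, ball x e y -> A y.

Definition boundary (A : X -> Prop) : X -> Prop :=
  fun x => closure A x /\ ~ interior A x.

Definition countable_set (D : X -> Prop) : Prop :=
  exists f : X -> nat, forall x y, D x -> D y -> f x = f y -> x = y.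

Definition separable : Prop :=
  exists D : X -> Prop, countable_set D /\
    forall x e, 0 < e -> exists y, D y /\ dist X x y < e.

Definition C_set (A : X -> Prop) : Prop :=
  exists F : (X -> Prop) -> Prop,
    (forall C, F C -> clopen C) /\
    (forall x, A x <-> forall C, F C -> C x).

Definition sigmaC_set (A : X -> Prop) : Prop :=
  exists An : nat -> X -> Prop,
    (forall n, C_set (An n)) /\
    (forall x, A x <-> exists n, An n x).

Definition neighborhood (N : X -> Prop) (x : X) : Prop :=
  exists U, is_open U /\ U x /\ forall y, U y -> N y.

Definition almost_zero_dim : Prop :=
  forall x U, is_open U -> U x ->
    exists N, C_set N /\ neighborhood N x /\ forall y, N y -> U y.

Definition is_basis (B : (X -> Prop) -> Prop) : Prop :=
  (forall V, B V -> is_open V) /\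
  (forall x U, is_open U -> U x -> exists V, B V /\ V x /\ forall y, V y -> U y).

Definition rim_sigmaC : Prop :=
  exists B, is_basis B /\ forall V, B V -> sigmaC_set (boundary V).

Definition zero_dim : Prop :=
  exists B, is_basis B /\ forall V, B V -> clopen V.

End Topo.

(* Fix a basic open set V around x whose boundary is a countable union of
   C-sets A_k.  By almost zero-dimensionality and the Lindelöf property, V is
   an increasing union of C-sets M_k whose interiors cover V; say x is
   interior to M_j.  Two disjoint C-sets of a separable metric space can be
   separated by a clopen set, so there are clopen sets P_k containing A_k and
   disjoint from M_(k+j).  The set W = V \ (P_0 ∪ P_1 ∪ ...) contains x and is
   clopen: it is open because the P_k are locally finite on V, and closed
   because the open set ⋃ P_k contains the boundary of V. *)

From Pilot Require Import Defs.
From Stdlib Require Import Reals.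
From Stdlib Require Import Lra Lia Classical ClassicalEpsilon Cantor Wf_nat.
Open Scope R_scope.

Section Topology.
Variable X : MetricSpace.
Implicit Types (A B C U V W : X -> Prop) (x y z w : X).

Lemma ball_center x e : 0 < e -> Defs.ball X x e x.
Proof.
  intros he. unfold Defs.ball. rewrite (proj2 (Defs.dist_eq0 X x x) eq_refl). exact he.
Qed.

Lemma is_open_ball x e : is_open X (Defs.ball X x e).
Proof.
  intros y Hy. exists (e - Defs.dist X x y). split; [unfold Defs.ball in Hy; lra|].
  intros z Hz. unfold Defs.ball in *. pose proof (Defs.dist_tri X x y z). lra.
Qed.

Lemma is_open_ext A B : (forall x, A x <-> B x) -> is_open X A -> is_open X B.
Proof.
  intros H HA x Bx. destruct (HA x (proj2 (H x) Bx)) as [e [he Hb]].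
  exists e; split; auto. intros y Hy; apply H; auto.
Qed.

Lemma is_open_inter A B : is_open X A -> is_open X B -> is_open X (fun y => A y /\ B y).
Proof.
  intros HA HB x [Ax Bx].
  destruct (HA x Ax) as [e1 [he1 H1]], (HB x Bx) as [e2 [he2 H2]].
  exists (Rmin e1 e2). split; [now apply Rmin_pos|].
  intros y Hy. unfold Defs.ball in *.
  pose proof (Rmin_l e1 e2). pose proof (Rmin_r e1 e2).
  split; [apply H1 | apply H2]; unfold Defs.ball; lra.
Qed.

Lemma is_open_exists (P : nat -> X -> Prop) :
  (forall k, is_open X (P k)) -> is_open X (fun y => exists k, P k y).
Proof.
  intros HP y [k Pky]. destruct (HP k y Pky) as [e [he Hb]].
  exists e. split; [exact he|]. intros z Hz. exists k. auto.
Qed.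

Lemma is_open_finite_avoid (Q : nat -> X -> Prop) (j : nat) :
  (forall i, is_closed X (Q i)) -> is_open X (fun w => forall i, (i < j)%nat -> ~ Q i w).
Proof.
  intros HQ. induction j as [|j IH].
  - intros x _. exists 1. split; [lra|]. intros y _ i Hi. lia.
  - apply (is_open_ext (fun w => (forall i, (i < j)%nat -> ~ Q i w) /\ ~ Q j w)).
    + intros w. split.
      * intros [Hlt Hj] i Hi. destruct (Nat.eq_dec i j) as [->|]; [exact Hj|]. apply Hlt. lia.
      * intros H. split; [intros i Hi; exact (H i ltac:(lia)) | exact (H j ltac:(lia))].
    + apply is_open_inter; [exact IH | exact (HQ j)].
Qed.

Lemma clopen_empty : clopen X (fun _ => False).
Proof.
  split.
  - intros x [].
  - intros x _. exists 1. split; [lra|]. intros y _ [].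
Qed.

Lemma clopen_compl C : clopen X C -> clopen X (fun z => ~ C z).
Proof.
  intros [Co Cc]. split; [exact Cc|].
  apply (is_open_ext C); [|exact Co]. intros x. split; [tauto | apply NNPP].
Qed.

Lemma clopen_union A B : clopen X A -> clopen X B -> clopen X (fun z => A z \/ B z).
Proof.
  intros [Ao Ac] [Bo Bc]. split.
  - intros z [Az|Bz];
      [destruct (Ao z Az) as [e [he Hb]] | destruct (Bo z Bz) as [e [he Hb]]];
      exists e; split; auto.
  - apply (is_open_ext (fun z => ~ A z /\ ~ B z)); [intros z; tauto|].
    now apply is_open_inter.
Qed.

Lemma C_set_iff A :
  C_set X A <-> forall y, ~ A y -> exists C, clopen X C /\ (forall z, A z -> C z) /\ ~ C y.
Proof.
  split.
  - intros [F [HF HA]] y Ay. rewrite HA in Ay.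
    apply not_all_ex_not in Ay as [C HC]. apply imply_to_and in HC as [FC Cy].
    exists C. split; [exact (HF C FC)|]. split; [intros z Az; exact (proj1 (HA z) Az C FC) | exact Cy].
  - intros Hsep. exists (fun C => clopen X C /\ forall z, A z -> C z).
    split; [tauto|]. intros x. split.
    + intros Ax C [_ HC]. auto.
    + intros H. apply NNPP. intros Ax.
      destruct (Hsep x Ax) as [C [HC [AC Cx]]]. exact (Cx (H C (conj HC AC))).
Qed.

Lemma C_set_ext A B : (forall x, A x <-> B x) -> C_set X A -> C_set X B.
Proof.
  intros H HA. apply C_set_iff. intros y By.
  destruct (proj1 (C_set_iff A) HA y (fun Ay => By (proj1 (H y) Ay))) as [C [HC [AC Cy]]].
  exists C. split; [exact HC|]. split; [intros z Bz; apply AC, H, Bz | exact Cy].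
Qed.

Lemma C_set_empty : C_set X (fun _ => False).
Proof.
  apply C_set_iff. intros y _. exists (fun _ => False).
  split; [apply clopen_empty | tauto].
Qed.

Lemma C_set_union A B : C_set X A -> C_set X B -> C_set X (fun z => A z \/ B z).
Proof.
  rewrite !C_set_iff. intros HA HB y ABy.
  destruct (HA y (fun Ay => ABy (or_introl Ay))) as [C1 [HC1 [AC1 C1y]]].
  destruct (HB y (fun By => ABy (or_intror By))) as [C2 [HC2 [BC2 C2y]]].
  exists (fun z => C1 z \/ C2 z). split; [now apply clopen_union|].
  split; [intros z [Az|Bz]; auto | tauto].
Qed.

Lemma C_set_partial_union (N : nat -> X -> Prop) :
  (forall j, C_set X (N j)) -> forall k, C_set X (fun y => exists j, (j <= k)%nat /\ N j y).
Proof.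
  intros HN. induction k as [|k IH].
  - apply (C_set_ext (N 0%nat)); [|exact (HN 0%nat)].
    intros y. split; [exists 0%nat; auto|].
    intros [j [Hj Njy]]. now replace j with 0%nat in Njy by lia.
  - apply (C_set_ext (fun y => (exists j, (j <= k)%nat /\ N j y) \/ N (S k) y)).
    + intros y. split.
      * intros [[j [Hj Njy]]|Hy]; [exists j | exists (S k)]; split; auto.
      * intros [j [Hj Njy]]. destruct (Nat.eq_dec j (S k)) as [->|]; [now right|].
        left. exists j. split; [lia | exact Njy].
    + now apply C_set_union.
Qed.

Lemma lindelof_cover (S : X -> Prop) (Good : (X -> Prop) -> Prop) :
  separable X -> Good (fun _ => False) ->
  (forall y, S y -> exists G, Good G /\ exists e, 0 < e /\ forall z, Defs.ball X y e z -> G z) ->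
  exists G : nat -> X -> Prop, (forall j, Good (G j)) /\
    forall y, S y -> exists j e, 0 < e /\ forall z, Defs.ball X y e z -> G j z.
Proof.
  intros [D [[f finj] dense]] Gempty Hcov.
  (* [G (n, m)] is a [Good] set containing the ball of radius 1/m around the
     [n]-th point of [D], whenever such a set exists. *)
  set (fits := fun (p : nat * nat) G => Good G /\ exists d, D d /\ f d = fst p /\
                 forall z, Defs.ball X d (/ INR (snd p)) z -> G z).
  assert (Hchoice : forall p, exists G, Good G /\ ((exists G', fits p G') -> fits p G)).
  { intros p. destruct (classic (exists G', fits p G')) as [[G' HG']|Hnone].
    - exists G'. split; [apply HG' | auto].
    - exists (fun _ => False). split; [exact Gempty | tauto]. }
  destruct (choice _ Hchoice) as [G HG].
  exists (fun j => G (of_nat j)). split; [intros j; exact (proj1 (HG (of_nat j)))|].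
  intros y Sy. destruct (Hcov y Sy) as [G0 [Good0 [e [he Hb]]]].
  destruct (archimed_cor1 (e / 2)) as [m [Hm Hm0]]; [lra|].
  assert (Hr : 0 < / INR m) by (apply Rinv_0_lt_compat, lt_0_INR; lia).
  destruct (dense y (/ INR m) Hr) as [d [Dd Hd]].
  assert (Hfit : fits (f d, m) G0).
  { split; [exact Good0|]. exists d. repeat split; auto. intros z Hz. apply Hb.
    unfold Defs.ball in *. simpl in Hz. pose proof (Defs.dist_tri X y d z). lra. }
  destruct (proj2 (HG (f d, m)) (ex_intro _ G0 Hfit)) as [_ [d' [Dd' [Hfd Hball]]]].
  assert (d' = d) by (apply finj; auto). subst d'.
  exists (to_nat (f d, m)), (/ INR m - Defs.dist X d y).
  rewrite cancel_of_to. split.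
  - rewrite Defs.dist_sym. lra.
  - intros z Hz. apply Hball. unfold Defs.ball in *. simpl.
    pose proof (Defs.dist_tri X d y z). lra.
Qed.

Section FirstHit.
Variable G : nat -> X -> Prop.
Hypothesis G_clopen : forall j, clopen X (G j).
Hypothesis G_cover : forall z, exists j, G j z.

Definition first_hit (j : nat) (z : X) : Prop := G j z /\ forall i, (i < j)%nat -> ~ G i z.

Lemma first_hit_exists z : exists j, first_hit j z.
Proof.
  destruct (dec_inh_nat_subset_has_unique_least_element (fun j => G j z))
    as [j [[Gjz Hleast] _]]; [intros j; apply classic | apply G_cover|].
  exists j. split; [exact Gjz|]. intros i Hi Giz. specialize (Hleast i Giz). lia.
Qed.

Lemma first_hit_unique j j' z : first_hit j z -> first_hit j' z -> j = j'.
Proof.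
  intros [Gj Hj] [Gj' Hj']. destruct (Nat.lt_total j j') as [Hlt|[->|Hgt]]; auto.
  - now destruct (Hj' j Hlt).
  - now destruct (Hj j' Hgt).
Qed.

Lemma is_open_first_hit_union (Q : nat -> Prop) :
  is_open X (fun z => exists j, first_hit j z /\ Q j).
Proof.
  apply is_open_exists. intros j.
  apply (is_open_ext (fun z => Q j /\ first_hit j z)); [intros z; tauto|].
  apply is_open_inter.
  - intros z Qj. exists 1. split; [lra | auto].
  - apply is_open_inter; [apply G_clopen|].
    apply is_open_finite_avoid. intros i. apply G_clopen.
Qed.

Lemma clopen_first_hit_union (Q : nat -> Prop) :
  clopen X (fun z => exists j, first_hit j z /\ Q j).
Proof.
  (* The pieces [first_hit j] partition X, so the complement of a union of
     pieces is the union of the remaining pieces. *)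
  split; [apply is_open_first_hit_union|].
  apply (is_open_ext (fun z => exists j, first_hit j z /\ ~ Q j));
    [|apply is_open_first_hit_union].
  intros z. split.
  - intros [j [Hj nQj]] [j' [Hj' Qj']]. apply nQj.
    now rewrite (first_hit_unique j j' z Hj Hj').
  - intros Hz. destruct (first_hit_exists z) as [j Hj].
    exists j. split; [exact Hj|]. intros Qj. apply Hz. eauto.
Qed.

End FirstHit.

Lemma C_set_clopen_nbhd_avoiding B y :
  C_set X B -> ~ B y -> exists C, clopen X C /\ C y /\ forall z, C z -> ~ B z.
Proof.
  intros HB By. destruct (proj1 (C_set_iff B) HB y By) as [C [HC [BC Cy]]].
  exists (fun z => ~ C z). split; [now apply clopen_compl|]. split; [exact Cy | auto].
Qed.

Lemma separate_C_sets A B :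
  separable X -> C_set X A -> C_set X B -> (forall y, A y -> B y -> False) ->
  exists P, clopen X P /\ (forall y, A y -> P y) /\ (forall y, P y -> ~ B y).
Proof.
  intros Hsep HA HB Hdisj.
  set (Good := fun C => clopen X C /\ ((forall y, C y -> ~ A y) \/ (forall y, C y -> ~ B y))).
  destruct (lindelof_cover (fun _ => True) Good Hsep) as [G [HG Hcov]].
  - split; [apply clopen_empty | left; tauto].
  - intros y _.
    assert (Hnbhd : forall E, C_set X E -> ~ E y -> exists C, clopen X C /\
               (forall z, C z -> ~ E z) /\ exists e, 0 < e /\ forall z, Defs.ball X y e z -> C z).
    { intros E HE Ey. destruct (C_set_clopen_nbhd_avoiding E y HE Ey) as [C [HC [Cy CE]]].
      exists C. split; [exact HC|]. split; [exact CE | apply (proj1 HC y Cy)]. }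
    destruct (classic (A y)) as [Ay|Ay].
    + destruct (Hnbhd B HB (Hdisj y Ay)) as [C [HC [CB Hball]]].
      exists C. split; [split; auto | exact Hball].
    + destruct (Hnbhd A HA Ay) as [C [HC [CA Hball]]].
      exists C. split; [split; auto | exact Hball].
  - assert (Gcover : forall z, exists j, G j z).
    { intros z. destruct (Hcov z I) as [j [e [he Hb]]]. exists j. apply Hb, ball_center, he. }
    assert (Gclopen : forall j, clopen X (G j)) by (intros j; apply HG).
    exists (fun z => exists j, first_hit G j z /\ forall w, G j w -> ~ B w).
    split; [now apply clopen_first_hit_union|]. split.
    + intros y Ay. destruct (first_hit_exists G Gcover y) as [j Hj].
      exists j. split; [exact Hj|].
      destruct (proj2 (HG j)) as [HGA|HGB]; [now destruct (HGA y (proj1 Hj))| exact HGB].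
    + intros y [j [Hj HGB]]. exact (HGB y (proj1 Hj)).
Qed.

Lemma C_set_exhaustion V :
  separable X -> almost_zero_dim X -> is_open X V ->
  exists M : nat -> X -> Prop,
    (forall k, C_set X (M k)) /\ (forall k y, M k y -> V y) /\
    (forall k k' y, (k <= k')%nat -> M k y -> M k' y) /\
    (forall y, V y -> exists k e, 0 < e /\ forall w, Defs.ball X y e w -> M k w).
Proof.
  intros Hsep Hazd HV.
  destruct (lindelof_cover V (fun N => C_set X N /\ forall z, N z -> V z) Hsep)
    as [N [HN Hcov]].
  - split; [apply C_set_empty | tauto].
  - intros y Vy. destruct (Hazd y V HV Vy) as [N0 [HN0 [[U [HU [Uy UN0]]] N0V]]].
    destruct (HU y Uy) as [e [he Hb]].
    exists N0. split; [split; auto|]. exists e. split; auto.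
  - exists (fun k y => exists j, (j <= k)%nat /\ N j y). split; [|split; [|split]].
    + apply C_set_partial_union. intros j. apply HN.
    + intros k y [j [_ Njy]]. exact (proj2 (HN j) y Njy).
    + intros k k' y Hk [j [Hj Njy]]. exists j. split; [lia | exact Njy].
    + intros y Vy. destruct (Hcov y Vy) as [j [e [he Hb]]].
      exists j, e. split; [exact he|]. intros w Hw. exists j. split; [lia | auto].
Qed.

Lemma is_open_minus_locally_finite V (P : nat -> X -> Prop) :
  is_open X V -> (forall k, is_closed X (P k)) ->
  (forall y, V y -> exists j e, 0 < e /\
     forall w, Defs.ball X y e w -> forall k, (j <= k)%nat -> ~ P k w) ->
  is_open X (fun y => V y /\ ~ exists k, P k y).
Proof.
  intros HV HP Hlf y [Vy Py].
  destruct (Hlf y Vy) as [j [e [he Hfar]]].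
  set (O := fun w => (V w /\ forall i, (i < j)%nat -> ~ P i w) /\ Defs.ball X y e w).
  assert (HO : is_open X O).
  { apply is_open_inter; [apply is_open_inter|]; auto using is_open_finite_avoid, is_open_ball. }
  destruct (HO y) as [e' [he' Hb]].
  { split; [split|]; [exact Vy | intros i _ Piy; eauto | now apply ball_center]. }
  exists e'. split; [exact he'|]. intros w Hw.
  destruct (Hb w Hw) as [[Vw Hnear] Hwe]. split; [exact Vw|].
  intros [k Pkw]. destruct (Nat.lt_ge_cases k j) as [Hk|Hk].
  - exact (Hnear k Hk Pkw).
  - exact (Hfar w Hwe k Hk Pkw).
Qed.

Lemma is_closed_minus_boundary_nbhd V O :
  is_open X V -> is_open X O -> (forall y, boundary X V y -> O y) ->
  is_closed X (fun y => V y /\ ~ O y).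
Proof.
  intros HV HO Hbd y Hy. destruct (classic (O y)) as [Oy|Oy].
  - destruct (HO y Oy) as [e [he Hb]].
    exists e. split; [exact he|]. intros z Hz [_ Oz]. exact (Oz (Hb z Hz)).
  - assert (Vy : ~ V y) by tauto.
    assert (Hcl : ~ Defs.closure X V y).
    { intros Hcl. apply Oy, Hbd. split; [exact Hcl|].
      intros [e [he Hb]]. exact (Vy (Hb y (ball_center y e he))). }
    apply not_all_ex_not in Hcl as [e He]. apply imply_to_and in He as [he He].
    exists e. split; [exact he|]. intros z Hz [Vz _]. apply He. exists z. auto.
Qed.

Lemma clopen_nbhd_within V x :
  separable X -> almost_zero_dim X -> is_open X V -> sigmaC_set X (boundary X V) -> V x ->
  exists W, clopen X W /\ W x /\ forall y, W y -> V y.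
Proof.
  intros Hsep Hazd HV [A [HA HbdA]] Vx.
  destruct (C_set_exhaustion V Hsep Hazd HV) as [M [HM [MV [Mmono Mcov]]]].
  destruct (Mcov x Vx) as [j0 [e0 [he0 Hx]]].
  assert (HP : forall k, exists P, clopen X P /\ (forall y, A k y -> P y) /\
                                   (forall y, P y -> ~ M (k + j0)%nat y)).
  { intros k. apply separate_C_sets; auto.
    intros y Aky Mky. destruct (proj2 (HbdA y) (ex_intro _ k Aky)) as [_ Hint].
    apply Hint. apply HV. exact (MV _ y Mky). }
  destruct (choice _ HP) as [P HPk].
  exists (fun y => V y /\ ~ exists k, P k y). split; [split|split].
  - apply is_open_minus_locally_finite; [exact HV | intros k; apply HPk|].
    intros y Vy. destruct (Mcov y Vy) as [j [e [he Hb]]].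
    exists j, e. split; [exact he|]. intros w Hw k Hk Pkw.
    apply (proj2 (proj2 (HPk k)) w Pkw). apply (Mmono j); [lia | exact (Hb w Hw)].
  - apply is_closed_minus_boundary_nbhd; [exact HV | apply is_open_exists; apply HPk|].
    intros y Hy. destruct (proj1 (HbdA y) Hy) as [k Aky]. exists k. now apply HPk.
  - split; [exact Vx|]. intros [k Pkx]. apply (proj2 (proj2 (HPk k)) x Pkx).
    apply (Mmono j0); [lia | exact (Hx x (ball_center x e0 he0))].
  - tauto.
Qed.

End Topology.

Theorem corollary4p5 (X : MetricSpace) :
  separable X -> almost_zero_dim X -> rim_sigmaC X -> zero_dim X.
Proof.
  intros Hsep Hazd [B [[HBopen HBbasis] HBbd]].
  exists (clopen X). split; [split|]; [intros W HW; apply HW | | tauto].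
  intros x U HU Ux.
  destruct (HBbasis x U HU Ux) as [V [BV [Vx VU]]].
  destruct (clopen_nbhd_within X V x Hsep Hazd (HBopen V BV) (HBbd V BV) Vx)
    as [W [HW [Wx WV]]].
  exists W. auto.
Qed.
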